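(* Let $\mathcal{T}$ be a trim transducer with a single initial state. Then $\mathcal{W}(\mathcal{T})$ and $\mathcal{T}$ are equivalent, i.e. $[\![\mathcal{W}(\mathcal{T})]\!]=[\![\mathcal{T}]\!]$. Moreover, if $\mathcal{T}$ satisfies the weak twinning property, then $\mathcal{W}(\mathcal{T})$ is finite, and it is a multi-transducer.
   Context: $\mathcal{T}=(Q,E,I,F,f)$ is a transducer: finite state set $Q$, initial states $I$, final states $F$, transitions $E\subseteq Q\times\Sigma\times\Gamma^*\times Q$, final output $f:F\to\Gamma^*$; it realises $[\![\mathcal{T}]\!]=\{(u,wf(t)) : i\xrightarrow{u\mid w}t,\ i\in I,\ t\in F\}$ where $i\xrightarrow{u\mid w}t$ is a run reading $u$ and outputting $w$; trim means every state lies on a run from an initial to a final state. A multi-transducer is like a transducer except that the final output function maps final states to finite sets of words, and it realises $\{(u,wx): i\xrightarrow{u\mid w}t,\ x\in f(t)\}$ (possibly with infinitely many states). Determinisation $\bar{\mathcal{D}}(\mathcal{T})$: its states are the finite subsets $U$ of $Q\times\Gamma^*$. For such $U$ and $\sigma\in\Sigma$, let $R_{U,\sigma}=\{(q,uv) : (p,u)\in U,\ (p,\sigma,v,q)\in E\}$, let $w_{U,\sigma}$ be the longest common prefix of the words $\{w : (q,w)\in R_{U,\sigma}\text{ for some }q\}$ (taken to be $\epsilon$ if this set is empty), and $P_{U,\sigma}=\{(q,w) : (q,w_{U,\sigma}w)\in R_{U,\sigma}\}$. The transitions of $\bar{\mathcal{D}}(\mathcal{T})$ are $(U,\sigma,w_{U,\sigma},P_{U,\sigma})$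 for all $U,\sigma$; the initial state is $U_0=I\times\{\epsilon\}$; final states are the $U$ with $U\cap(F\times\Gamma^* )\neq\emptyset$, with final output set $\{wf(q) : q\in F,\ (q,w)\in U\}$. Rank: $n_U$ is the set of strongly connected components of $\mathcal{T}$ reachable from the states $q$ with $(q,w)\in U$ for some $w$. $\bar{\mathcal{W}}(\mathcal{T})$ is obtained from $\bar{\mathcal{D}}(\mathcal{T})$ by removing every transition $(U,\sigma,v,U')$ with $n_{U'}\subsetneq n_U$ and replacing it by the transitions $(U,\sigma,vw,\{(q,\epsilon)\})$ for all $(q,w)\in U'$. The weak determinisation $\mathcal{W}(\mathcal{T})$ is the trim part of $\bar{\mathcal{W}}(\mathcal{T})$ (restriction to states lying on some run from the initial state to a final state). $\Delta(v,w)=v^{-1}w$ in the free group over $\Gamma$. $\mathcal{T}$ satisfies the weak twinning property if for all states $q_1,q_2$, all $u,v\in\Sigma^*$ and $u_1,u_2,v_1,v_2\in\Gamma^*$ with $q_1\xrightarrow{u\mid u_1}q_1$, $q_1\xrightarrow{v\mid v_1}q_1$, $q_1\xrightarrow{u\mid u_2}q_2$, $q_2\xrightarrow{v\mid v_2}q_2$, one has $\Delta(u_1,u_2)=\Delta(u_1v_1,u_2v_2)$. *)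

From HB Require Import structures.
From mathcomp Require Import all_boot finmap.
Set Implicit Arguments.
Unset Strict Implicit.
Unset Printing Implicit Defensive.
Local Open Scope fset_scope.

(* The final output f is a total function, only used on F.             *)
Record transducer (Q Sigma Gamma : finType) := Transducer {
  tE : seq (Q * Sigma * seq Gamma * Q);
  tI : {set Q};
  tF : {set Q};
  tf : Q -> seq Gamma }.

Section Transducer.
Variables (Q Sigma Gamma : finType) (T : transducer Q Sigma Gamma).

Inductive run : Q -> seq Sigma -> seq Gamma -> Q -> Prop :=
| run_nil p : run p [::] [::] p
| run_cons p a v q u w r :
    (p, a, v, q) \in tE T -> run q u w r -> run p (a :: u) (v ++ w) r.

Definition realises (u : seq Sigma) (out : seq Gamma) : Prop :=
  exists i t w, [/\ i \in tI T, t \in tF T, run i u w t & out = w ++ tf T t].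

Definition is_trim : Prop :=
  forall q : Q, exists i t u1 w1 u2 w2,
    [/\ i \in tI T, t \in tF T, run i u1 w1 q & run q u2 w2 t].

(* Free group over Γ: elements are freely reduced words over the letters
   Γ × bool ((a,true) = a, (a,false) = a^{-1}); [fg_reduce] computes the
   (unique) freely reduced word representing a word, so two words are equal
   in the free group iff their reductions coincide. *)
Definition fg_letter := (Gamma * bool)%type.
Definition fg_of (w : seq Gamma) : seq fg_letter := map (fun a => (a, true)) w.
Definition fg_inv (s : seq fg_letter) : seq fg_letter :=
  rev (map (fun x => (x.1, ~~ x.2)) s).
Definition fg_reduce (s : seq fg_letter) : seq fg_letter :=
  foldr (fun x acc => match acc with
                      | y :: acc' => if (y.1 == x.1) && (y.2 == ~~ x.2) then acc'
                                     else x :: acc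
                      | [::] => [:: x]
                      end) [::] s.
Definition Delta (v w : seq Gamma) : seq fg_letter :=
  fg_reduce (fg_inv (fg_of v) ++ fg_of w).

Definition weak_twinning : Prop :=
  forall (q1 q2 : Q) (u v : seq Sigma) (u1 u2 v1 v2 : seq Gamma),
    run q1 u u1 q1 -> run q1 v v1 q1 -> run q1 u u2 q2 -> run q2 v v2 q2 ->
    Delta u1 u2 = Delta (u1 ++ v1) (u2 ++ v2).

Definition tedge : rel Q := fun p q => has (fun e => (e.1.1.1 == p) && (e.2 == q)) (tE T).
Definition scc (q : Q) : {set Q} := [set r | connect tedge q r && connect tedge r q].

Definition dstate := {fset (Q * seq Gamma)}.

Fixpoint lcp2 (v w : seq Gamma) : seq Gamma :=
  match v, w with
  | a :: v', b :: w' => if a == b then a :: lcp2 v' w' else [::]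
  | _, _ => [::]
  end.
Definition lcp (ws : seq (seq Gamma)) : seq Gamma :=
  match ws with [::] => [::] | w :: ws' => foldl lcp2 w ws' end.

Definition rank (U : dstate) : {set {set Q}} :=
  [set scc r | r in [set r : Q | [exists x : U, connect tedge (val x).1 r]]].

Definition R_ (U : dstate) (s : Sigma) : dstate :=
  [fset x | x in [seq (e.2, pu.2 ++ e.1.2)
                  | pu <- enum_fset U,
                    e <- [seq e <- tE T | (e.1.1.1 == pu.1) && (e.1.1.2 == s)]]].
Definition w_ (U : dstate) (s : Sigma) : seq Gamma :=
  lcp [seq x.2 | x <- enum_fset (R_ U s)].
Definition P_ (U : dstate) (s : Sigma) : dstate :=
  [fset (x.1, drop (size (w_ U s)) x.2) | x in R_ U s & prefix (w_ U s) x.2].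

Definition U0 : dstate := [fset x | x in [seq (i, [::] : seq Gamma) | i <- enum (tI T)]].
Definition dfinal (U : dstate) : bool := has (fun x => x.1 \in tF T) (enum_fset U).
Definition dout (U : dstate) : seq (seq Gamma) :=
  [seq x.2 ++ tf T x.1 | x <- enum_fset U & x.1 \in tF T].

Definition Dbar_trans (U : dstate) (s : Sigma) (v : seq Gamma) (U' : dstate) : Prop :=
  v = w_ U s /\ U' = P_ U s.

Definition Wbar_trans (U : dstate) (s : Sigma) (v : seq Gamma) (U'' : dstate) : Prop :=
  exists U', Dbar_trans U s (w_ U s) U' /\
  (if rank U' \proper rank U then
     exists q w, [/\ (q, w) \in U', v = w_ U s ++ w & U'' = [fset (q, [::] : seq Gamma)]]
   else v = w_ U s /\ U'' = U').
End Transducer.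

(* Multi-transducers, with possibly infinitely many states: a state    *)
(* predicate mQ over a type S, a transition relation, initial states,  *)
(* final states, and a finite set (list) of final outputs per state.   *)
Record mtransducer (S : Type) (Sigma Gamma : Type) := MTransducer {
  mQ : S -> Prop;
  mE : S -> Sigma -> seq Gamma -> S -> Prop;
  mI : S -> Prop;
  mF : S -> Prop;
  mf : S -> seq (seq Gamma) }.

Section MTransducer.
Variables (S : Type) (Sigma Gamma : eqType) (M : mtransducer S Sigma Gamma).

Inductive mrun : S -> seq Sigma -> seq Gamma -> S -> Prop :=
| mrun_nil p : mQ M p -> mrun p [::] [::] p
| mrun_cons p a v q u w r :
    mQ M p -> mE M p a v q -> mrun q u w r -> mrun p (a :: u) (v ++ w) r.

Definition mrealises (u : seq Sigma) (out : seq Gamma) : Prop :=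
  exists i t w x, [/\ mI M i, mF M t, mrun i u w t, x \in mf M t & out = w ++ x].

Definition mtrim_state (q : S) : Prop :=
  exists i t u1 w1 u2 w2, [/\ mI M i, mF M t, mrun i u1 w1 q & mrun q u2 w2 t].

Definition mtrim : mtransducer S Sigma Gamma :=
  {| mQ := mtrim_state;
     mE := fun p a v q => [/\ mtrim_state p, mtrim_state q & mE M p a v q];
     mI := fun q => mI M q /\ mtrim_state q;
     mF := fun q => mF M q /\ mtrim_state q;
     mf := mf M |}.
End MTransducer.

Definition mfinite (S Sigma Gamma : eqType) (M : mtransducer S Sigma Gamma) : Prop :=
  exists (sQ : seq S) (sE : seq (S * Sigma * seq Gamma * S)),
    (forall q, mQ M q -> q \in sQ) /\
    (forall p a v q, mE M p a v q -> (p, a, v, q) \in sE).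

Section W.
Variables (Q Sigma Gamma : finType) (T : transducer Q Sigma Gamma).

Definition Wbar : mtransducer (dstate Q Gamma) Sigma Gamma :=
  {| mQ := fun _ => True;
     mE := @Wbar_trans Q Sigma Gamma T;
     mI := fun U => U = U0 T;
     mF := fun U => dfinal T U;
     mf := dout T |}.

Definition W : mtransducer (dstate Q Gamma) Sigma Gamma := mtrim Wbar.
End W.

From mathcomp Require Import all_boot finmap zify.
Set Implicit Arguments. Unset Strict Implicit. Unset Printing Implicit Defensive.

(* Each pair (q, w) in a state U of the determinisation records a run of T that reached q
   and whose output exceeds the output produced so far by w.  A transition of W(T) moves
   every pair along one transition of T, and collapsing a state to a singleton when the
   rank drops keeps this correspondence, so runs of W(T) and of T simulate each other and
   the realised relations agree.

   For finiteness, consider a state of W(T) reached from the single initial state.  Since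
   the last rank drop, all its pairs come from runs of T on a common input from one state
   q0 whose strongly connected component is still reachable from the state.  Two such runs
   of length at least |Q|^2 contain a synchronised loop; weak twinning, applied to that loop
   closed up through q0, shows that cutting it out leaves the delay Delta unchanged.  Hence
   all delays are bounded by 2 |Q|^2 times the largest transition output.  As the stored
   words have no common first letter, their lengths are bounded by twice that, and only
   finitely many states and transitions are possible. *)

Section FreeGroup.
Variable Gamma : finType.
Notation letter := (fg_letter Gamma).
Implicit Types (x y : letter) (s c : seq letter) (v w : seq Gamma).

Definition fg_inv1 x : letter := (x.1, ~~ x.2).

Definition fg_cancel x y := (y.1 == x.1) && (y.2 == ~~ x.2).

Definition fg_step x c : seq letter :=
  if c is y :: c' then if fg_cancel x y then c' else x :: c else [:: x].

(* [fg_push s c] is the reduced form of [s ++ c] when [c] is reduced. *)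
Definition fg_push s c := foldr fg_step c s.

Fixpoint fg_reduced s : bool :=
  if s is x :: ((y :: _) as s') then ~~ fg_cancel x y && fg_reduced s'
  else true.

Lemma fg_reduceE s : fg_reduce s = fg_push s [::].
Proof. by []. Qed.

Lemma fg_reduced_behead x s : fg_reduced (x :: s) -> fg_reduced s.
Proof. by case: s => //= y s /andP[]. Qed.

Lemma fg_reduced_step x c : fg_reduced c -> fg_reduced (fg_step x c).
Proof.
case: c => [|y c] //= Hc; case: ifP => Exy; first exact: fg_reduced_behead Hc.
by rewrite /= Exy Hc.
Qed.

Lemma fg_reduced_push s c : fg_reduced c -> fg_reduced (fg_push s c).
Proof. by elim: s => //= x s IH /IH; apply: fg_reduced_step. Qed.

Lemma fg_inv1K : involutive fg_inv1.
Proof. by case=> a b; rewrite /fg_inv1 /= negbK. Qed.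

Lemma fg_stepK x c : fg_reduced c -> fg_step x (fg_step (fg_inv1 x) c) = c.
Proof.
rewrite /fg_step /fg_cancel; case: c => [|y c] /=; first by rewrite /fg_inv1 /= !eqxx.
case: ifP => [/andP[/eqP E1 /eqP E2]|]; last by rewrite /fg_inv1 /= !eqxx.
have -> : y = x by case: y E1 E2 => a b /= -> ->; rewrite negbK; case: x.
by case: c => [|z c] //= /andP[]; rewrite /fg_cancel => /negPf ->.
Qed.

Lemma fg_push_cat s s' c : fg_push (s ++ s') c = fg_push s (fg_push s' c).
Proof. exact: foldr_cat. Qed.

Lemma fg_push_rcons s x c : fg_push (rcons s x) c = fg_push s (fg_step x c).
Proof. by rewrite -cats1 fg_push_cat. Qed.

Lemma fg_push_step x s c : fg_reduced c ->
  fg_push (fg_step x s) c = fg_step x (fg_push s c).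
Proof.
move=> Hc; case: s => [|y s] //=; case: ifP => //= /andP[/eqP E1 /eqP E2].
have -> : y = fg_inv1 x by case: y E1 E2 => a b /= -> ->.
by rewrite fg_stepK // fg_reduced_push.
Qed.

Lemma fg_push_reduce s c : fg_reduced c -> fg_push (fg_reduce s) c = fg_push s c.
Proof. by move=> Hc; elim: s => //= x s IH; rewrite fg_push_step // IH. Qed.

Lemma fg_inv_cons x s : fg_inv (x :: s) = rcons (fg_inv s) (fg_inv1 x).
Proof. by rewrite /fg_inv map_cons rev_cons. Qed.

Lemma fg_inv_cat s s' : fg_inv (s ++ s') = fg_inv s' ++ fg_inv s.
Proof. by rewrite /fg_inv map_cat rev_cat. Qed.

Lemma fg_pushK s c : fg_reduced c -> fg_push (fg_inv s) (fg_push s c) = c.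
Proof.
move=> Hc; elim: s => //= x s IH.
rewrite fg_inv_cons fg_push_rcons.
by have := fg_stepK (fg_inv1 x) (fg_reduced_push s Hc); rewrite fg_inv1K => ->.
Qed.

Lemma fg_of_cat v w : fg_of (v ++ w) = fg_of v ++ fg_of w.
Proof. exact: map_cat. Qed.

Lemma fg_reduce_of w : fg_reduce (fg_of w) = fg_of w.
Proof. by elim: w => //= a w ->; case: w => //= b w; rewrite andbF. Qed.

Lemma fg_reduced_of w : fg_reduced (fg_of w).
Proof. by rewrite -fg_reduce_of fg_reduced_push. Qed.

Lemma fg_push_of v w : fg_push (fg_of v) (fg_of w) = fg_of (v ++ w).
Proof.
by rewrite -[RHS]fg_reduce_of fg_of_cat fg_reduceE fg_push_cat -fg_reduceE fg_reduce_of.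
Qed.

Lemma DeltaE v w : Delta v w = fg_push (fg_inv (fg_of v)) (fg_of w).
Proof. by rewrite /Delta fg_reduceE fg_push_cat -fg_reduceE fg_reduce_of. Qed.

Lemma Delta_cat2l u v w : Delta (u ++ v) (u ++ w) = Delta v w.
Proof.
rewrite !DeltaE -[fg_of (u ++ w)]fg_push_of fg_of_cat fg_inv_cat fg_push_cat.
by rewrite fg_pushK ?fg_reduced_of.
Qed.

Lemma Delta_cat2r v w v' w' (s t : seq Gamma) : Delta v w = Delta v' w' ->
  Delta (v ++ s) (w ++ t) = Delta (v' ++ s) (w' ++ t).
Proof.
have splitE a b : Delta (a ++ s) (b ++ t)
    = fg_push (fg_inv (fg_of s)) (fg_push (Delta a b) (fg_of t)).
  rewrite [LHS]DeltaE [Delta a b]/Delta fg_push_reduce ?fg_reduced_of //.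
  by rewrite fg_push_cat fg_push_of !fg_of_cat fg_inv_cat fg_push_cat.
by move=> E; rewrite !splitE E.
Qed.

Lemma size_fg_step x c : size c <= (size (fg_step x c)).+1 <= (size c).+2.
Proof. by case: c => [|y c] //=; case: ifP => _ /=; lia. Qed.

Lemma size_fg_push_le s c : size (fg_push s c) <= size s + size c.
Proof.
elim: s => //= x s IH; have /andP[_] := size_fg_step x (fg_push s c).
by rewrite ltnS => /leq_trans; apply.
Qed.

Lemma size_fg_push_ge s c : size c <= size (fg_push s c) + size s.
Proof.
elim: s => [|x s IH] /=; first by rewrite addn0.
have /andP[Hx _] := size_fg_step x (fg_push s c).
by rewrite addnS -addSn (leq_trans IH) // leq_add2r.
Qed.

Lemma size_fg_inv_of v : size (fg_inv (fg_of v)) = size v.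
Proof. by rewrite size_rev !size_map. Qed.

Lemma size_Delta_le v w : size (Delta v w) <= size v + size w.
Proof.
by have := size_fg_push_le (fg_inv (fg_of v)) (fg_of w); rewrite size_fg_inv_of size_map -DeltaE.
Qed.

Lemma size_Delta_ge v w : size w <= size (Delta v w) + size v.
Proof.
by have := size_fg_push_ge (fg_inv (fg_of v)) (fg_of w); rewrite size_fg_inv_of size_map -DeltaE.
Qed.

Lemma fg_push_inverse_letters s y c : all (fun x => ~~ x.2) s -> ~~ y.2 ->
  fg_push s (y :: c) = s ++ y :: c.
Proof.
move=> + Hy; elim: s => //= x s IH /andP[Hx Hs]; rewrite IH //.
have [z [s' [-> Hz]]] : exists z s', s ++ y :: c = z :: s' /\ ~~ z.2.
  by case: s Hs {IH} => [|z s] /=; [exists y, c | case/andP; exists z, (s ++ y :: c)].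
by move: Hz Hx; case: z => z1 [] //= _; case: x => x1 [] //= _; rewrite /fg_cancel andbF.
Qed.

(* No cancellation happens in [Delta (a :: v) w] when [w] does not start with [a]. *)
Lemma size_Delta_cons a v w : ohead w != Some a ->
  size (Delta (a :: v) w) = (size v).+1 + size w.
Proof.
move=> Hw; rewrite DeltaE /= fg_inv_cons fg_push_rcons.
have -> : fg_step (fg_inv1 (a, true)) (fg_of w) = (a, false) :: fg_of w.
  case: w Hw => //= b w Hb; rewrite /fg_cancel /fg_inv1 /=.
  by case: eqP => //= Eba; rewrite Eba eqxx in Hb.
rewrite fg_push_inverse_letters //; last by rewrite /fg_inv all_rev !all_map; apply/allP.
by rewrite size_cat size_fg_inv_of /= size_map addnS.
Qed.

Lemma size_le_Delta_heads v D :
  (forall a, exists2 w, ohead w != Some a & size (Delta v w) <= D) -> size v <= D.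
Proof.
case: v => // a v /(_ a)[w Hw]; rewrite size_Delta_cons //.
by apply: leq_trans; rewrite leq_addr.
Qed.
End FreeGroup.

Section Runs.
Variables (Q Sigma Gamma : finType) (T : transducer Q Sigma Gamma).
Notation run := (run T).
Notation tedge := (tedge T).

Lemma run_cat p u w q u' w' r :
  run p u w q -> run q u' w' r -> run p (u ++ u') (w ++ w') r.
Proof.
elim=> //= {}p a v q0 {}u {}w r0 He _ IH Hr.
by rewrite -catA; apply: run_cons He (IH Hr).
Qed.

Lemma run_rcons p u w q a v r :
  run p u w q -> (q, a, v, r) \in tE T -> run p (rcons u a) (w ++ v) r.
Proof.
move=> Hr He; rewrite -cats1; apply: run_cat Hr _.
by rewrite -[v]cats0; apply: run_cons He (run_nil _ _).
Qed.

Lemma tedge_trans p a v q : (p, a, v, q) \in tE T -> tedge p q.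
Proof. by move=> He; apply/hasP; exists (p, a, v, q); rewrite //= !eqxx. Qed.

Lemma run_connect p u w q : run p u w q -> connect tedge p q.
Proof.
elim=> [p0|p0 a v q0 {}u {}w r He _]; first exact: connect0.
by apply: connect_trans; apply: connect1; apply: tedge_trans He.
Qed.

Lemma connect_run p q : connect tedge p q -> exists u w, run p u w q.
Proof.
case/connectP=> s + -> {q}; elim: s p => [|r s IH] p /=.
  by exists [::], [::]; apply: run_nil.
case/andP=> /hasP[[[[p' a] v] r'] He /andP[/eqP /= <- /eqP /= <-]] /IH[u [w Hr]].
by exists (a :: u), (v ++ w); apply: run_cons He Hr.
Qed.

Definition max_out := \max_(e <- tE T) size e.1.2.

Lemma size_run_out p u w q : run p u w q -> size w <= max_out * size u.
Proof.
elim=> //= {}p a v q0 {}u {}w r He _ IH.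
rewrite size_cat mulnS leq_add //.
exact: (@leq_bigmax_seq _ _ xpredT (fun e : Q * Sigma * seq Gamma * Q => size e.1.2) _ He).
Qed.

Inductive run2 : Q -> Q -> seq Sigma -> seq Gamma -> seq Gamma -> Q -> Q -> Prop :=
| run2_nil p q : run2 p q [::] [::] [::] p q
| run2_cons p q a v1 v2 p' q' u w1 w2 r s :
    (p, a, v1, p') \in tE T -> (q, a, v2, q') \in tE T -> run2 p' q' u w1 w2 r s ->
    run2 p q (a :: u) (v1 ++ w1) (v2 ++ w2) r s.

Lemma run2_of_runs p u w1 r q w2 s : run p u w1 r -> run q u w2 s -> run2 p q u w1 w2 r s.
Proof.
move=> Hr; elim: Hr q w2 s => [p0|p0 a v r0 {}u {}w1 r1 He _ IH] q w2 s Hs.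
  by inversion Hs; apply: run2_nil.
inversion Hs as [|q0 a' v' q' u' w' s' He' Hs']; subst.
exact: run2_cons He He' (IH _ _ _ Hs').
Qed.

Lemma run2_fst p q u w1 w2 r s : run2 p q u w1 w2 r s -> run p u w1 r.
Proof.
by elim=> [p0 q0|p0 q0 a v1 v2 p' q' u' x1 x2 r0 s0 H1 H2 _ IH];
  [apply: run_nil | apply: run_cons H1 IH].
Qed.

Lemma run2_snd p q u w1 w2 r s : run2 p q u w1 w2 r s -> run q u w2 s.
Proof.
by elim=> [p0 q0|p0 q0 a v1 v2 p' q' u' x1 x2 r0 s0 H1 H2 _ IH];
  [apply: run_nil | apply: run_cons H2 IH].
Qed.

Lemma run2_cat p q u w1 w2 r s u' w1' w2' r' s' :
  run2 p q u w1 w2 r s -> run2 r s u' w1' w2' r' s' ->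
  run2 p q (u ++ u') (w1 ++ w1') (w2 ++ w2') r' s'.
Proof.
elim=> //= {}p {}q a v1 v2 p' q' {}u {}w1 {}w2 r0 s0 H1 H2 _ IH H.
by rewrite -!catA; apply: run2_cons H1 H2 (IH H).
Qed.

Definition run2_via p q u w1 w2 r s (c : Q * Q) :=
  exists u1 u2 x1 x2 y1 y2, [/\ u = u1 ++ u2, w1 = x1 ++ y1, w2 = x2 ++ y2,
    run2 p q u1 x1 x2 c.1 c.2 & run2 c.1 c.2 u2 y1 y2 r s].

Definition run2_loop p q u w1 w2 r s :=
  exists c1 c2 u1 u2 u3 x1 x2 y1 y2 z1 z2,
  [/\ u2 != [::], u = u1 ++ u2 ++ u3, w1 = x1 ++ y1 ++ z1, w2 = x2 ++ y2 ++ z2 &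
   [/\ run2 p q u1 x1 x2 c1 c2, run2 c1 c2 u2 y1 y2 c1 c2 & run2 c1 c2 u3 z1 z2 r s]].

Section Extend.
Variables (p q p' q' r s : Q) (a : Sigma) (v1 v2 : seq Gamma).
Hypotheses (Hp : (p, a, v1, p') \in tE T) (Hq : (q, a, v2, q') \in tE T).

Lemma run2_via_cons u w1 w2 c : run2_via p' q' u w1 w2 r s c ->
  run2_via p q (a :: u) (v1 ++ w1) (v2 ++ w2) r s c.
Proof.
case=> u1 [u2 [x1 [x2 [y1 [y2 [-> -> -> H1 H2]]]]]].
exists (a :: u1), u2, (v1 ++ x1), (v2 ++ x2), y1, y2.
by split; rewrite ?catA //; apply: run2_cons Hp Hq H1.
Qed.

Lemma run2_loop_cons u w1 w2 : run2_loop p' q' u w1 w2 r s ->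
  run2_loop p q (a :: u) (v1 ++ w1) (v2 ++ w2) r s.
Proof.
case=> c1 [c2 [u1 [u2 [u3 [x1 [x2 [y1 [y2 [z1 [z2 [Hu2 -> -> -> [H1 H2 H3]]]]]]]]]]]].
exists c1, c2, (a :: u1), u2, u3, (v1 ++ x1), (v2 ++ x2), y1, y2, z1, z2.
by split; rewrite ?catA //; split => //; apply: run2_cons Hp Hq H1.
Qed.

Lemma run2_loop_back u w1 w2 : run2_via p' q' u w1 w2 r s (p, q) ->
  run2_loop p q (a :: u) (v1 ++ w1) (v2 ++ w2) r s.
Proof.
case=> u1 [u2 [x1 [x2 [y1 [y2 [-> -> -> H1 H2]]]]]].
exists p, q, [::], (a :: u1), u2, [::], [::], (v1 ++ x1), (v2 ++ x2), y1, y2.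
by split; rewrite ?catA //; split => //; [apply: run2_nil | apply: run2_cons Hp Hq H1].
Qed.
End Extend.

(* [L] lists the pairs of states visited, which are distinct as long as no loop occurs. *)
Lemma run2_loop_or_distinct p q u w1 w2 r s : run2 p q u w1 w2 r s ->
  run2_loop p q u w1 w2 r s \/
  exists2 L : seq (Q * Q), uniq L && (size L == (size u).+1) &
    forall c, c \in L -> run2_via p q u w1 w2 r s c.
Proof.
elim=> [p0 q0|p0 q0 a v1 v2 p' q' {}u {}w1 {}w2 r0 s0 H1 H2 Hu].
  right; exists [:: (p0, q0)] => // c; rewrite inE => /eqP -> /=.
  by exists [::], [::], [::], [::], [::], [::]; split => //; apply: run2_nil.
case=> [Hl|[L /andP[UL /eqP SL] HL]]; first by left; apply: run2_loop_cons Hl.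
have [Hin|Hnin] := boolP ((p0, q0) \in L); first by left; apply: run2_loop_back (HL _ Hin).
right; exists ((p0, q0) :: L); first by rewrite /= Hnin UL SL eqxx.
move=> c; rewrite inE => /orP[/eqP ->|/HL]; last exact: run2_via_cons.
exists [::], (a :: u), [::], [::], (v1 ++ w1), (v2 ++ w2).
by split => //; [apply: run2_nil | apply: run2_cons H1 H2 Hu].
Qed.

Lemma run2_long_loop p q u w1 w2 r s : run2 p q u w1 w2 r s -> #|{: Q * Q}| <= size u ->
  run2_loop p q u w1 w2 r s.
Proof.
case/run2_loop_or_distinct => // -[L /andP[UL /eqP SL] _] Hu.
by have := max_card (mem L); rewrite (card_uniqP UL) SL ltnNge Hu.
Qed.
End Runs.

Section Delay.
Variables (Q Sigma Gamma : finType) (T : transducer Q Sigma Gamma).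
Hypothesis WT : weak_twinning T.

Definition max_delay := (max_out T * #|{: Q * Q}|).*2.

(* Weak twinning, applied to the loop preceded by a path back to [q0], says that the
   loop does not change the delay. *)
Lemma Delta_run2_cut_loop q0 u w1 w2 p q :
  run2_loop T q0 q0 u w1 w2 p q -> connect (tedge T) p q0 ->
  exists u' w1' w2',
    [/\ size u' < size u, run2 T q0 q0 u' w1' w2' p q & Delta w1 w2 = Delta w1' w2'].
Proof.
case=> c1 [c2 [u1 [u2 [u3 [x1 [x2 [y1 [y2 [z1 [z2 [Hu2 -> -> -> [H1 H2 H3]]]]]]]]]]]] Hp.
exists (u1 ++ u3), (x1 ++ z1), (x2 ++ z2); split; first 2 last.
- rewrite !catA; apply: Delta_cat2r.
  have [v [o Hback]] : exists v o, run T c1 v o q0.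
    by apply: connect_run; apply: connect_trans Hp; apply: run_connect (run2_fst H3).
  have := WT (run_cat Hback (run2_fst H1)) (run2_fst H2)
             (run_cat Hback (run2_snd H1)) (run2_snd H2).
  by rewrite !Delta_cat2l -!catA !Delta_cat2l => ->.
- by rewrite !size_cat ltn_add2l -[X in X < _]add0n ltn_add2r lt0n size_eq0.
- exact: run2_cat H1 H3.
Qed.

Lemma Delta_run2_bounded q0 u w1 w2 p q :
  run2 T q0 q0 u w1 w2 p q -> connect (tedge T) p q0 -> size (Delta w1 w2) <= max_delay.
Proof.
have [n] := ubnP (size u); elim: n u w1 w2 => // n IH u w1 w2 Hn Hr Hp.
have [Hlong|Hshort] := leqP #|{: Q * Q}| (size u).
  have [u' [w1' [w2' [Hu' Hr' ->]]]] := Delta_run2_cut_loop (run2_long_loop Hr Hlong) Hp.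
  exact: IH (leq_trans Hu' _) Hr' Hp.
apply: leq_trans (size_Delta_le _ _) _; rewrite /max_delay -addnn.
have bound w p' q' : run T p' u w q' -> size w <= max_out T * #|{: Q * Q}|.
  by move/size_run_out/leq_trans; apply; rewrite leq_mul2l ltnW ?orbT.
by rewrite leq_add //; [apply: bound (run2_fst Hr) | apply: bound (run2_snd Hr)].
Qed.
End Delay.

Section Lcp.
Variable Gamma : finType.
Implicit Types (c v w : seq Gamma) (ws : seq (seq Gamma)).

Lemma lcp2_prefixl v w : prefix (lcp2 v w) v.
Proof. by elim: v w => [|a v IH] [|b w] //=; case: eqP => // ->; rewrite eqxx IH. Qed.

Lemma lcp2_prefixr v w : prefix (lcp2 v w) w.
Proof. by elim: v w => [|a v IH] [|b w] //=; case: eqP => // ->; rewrite eqxx IH. Qed.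

Lemma prefix_lcp2 c v w : prefix c v -> prefix c w -> prefix c (lcp2 v w).
Proof.
elim: c v w => [|x c IH] [|a v] [|b w] //=; first by rewrite prefix0s.
by case/andP=> /eqP <- Hv /andP[/eqP <- Hw]; rewrite eqxx /= eqxx IH.
Qed.

Lemma foldl_lcp2_prefix w ws : all (prefix (foldl (@lcp2 _) w ws)) (w :: ws).
Proof.
elim: ws w => [|x ws IH] w /=; first by rewrite prefix_refl.
have /andP[Hwx Hws] := IH (lcp2 w x).
by rewrite (prefix_trans Hwx (lcp2_prefixl _ _)) (prefix_trans Hwx (lcp2_prefixr _ _)).
Qed.

Lemma lcp_prefix ws w : w \in ws -> prefix (lcp ws) w.
Proof. by case: ws => // x ws Hw; apply: (allP (foldl_lcp2_prefix x ws)). Qed.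

Lemma prefix_lcp c ws : ws != [::] -> all (prefix c) ws -> prefix c (lcp ws).
Proof.
case: ws => // x ws _ /= /andP[]; elim: ws x => //= y ws IH x Hx /andP[Hy Hws].
exact: IH (prefix_lcp2 Hx Hy) Hws.
Qed.
End Lcp.

Local Open Scope fset_scope.

Section Determinisation.
Variables (Q Sigma Gamma : finType) (T : transducer Q Sigma Gamma).
Notation dst := (dstate Q Gamma).
Implicit Types (U : dst) (s : Sigma).

Lemma in_R U s x : x \in R_ T U s <->
  exists2 pu, pu \in U & exists2 v, (pu.1, s, v, x.1) \in tE T & x.2 = pu.2 ++ v.
Proof.
split.
  case/imfsetP=> _ /allpairsPdep[pu [e [Hpu + ->]]] -> /=.
  rewrite mem_filter => /andP[/andP[/eqP E1 /eqP E2] He].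
  by exists pu => //; exists e.1.2 => //; rewrite -E1 -E2; case: e He {E1 E2} => [[[]]].
case=> pu Hpu [v He Ex]; apply/imfsetP; exists x => //.
apply/allpairsPdep; exists pu, (pu.1, s, v, x.1); split => //.
  by rewrite mem_filter He !eqxx.
by rewrite /= -Ex -surjective_pairing.
Qed.

Lemma in_P U s z : z \in P_ T U s <->
  exists2 x, x \in R_ T U s /\ prefix (w_ T U s) x.2 & z = (x.1, drop (size (w_ T U s)) x.2).
Proof.
split; first by case/imfsetP=> x /= /andP[H1 H2] ->; exists x.
by case=> x [H1 H2] ->; apply/imfsetP; exists x => //=; rewrite inE H1.
Qed.

Lemma R_split U s x : x \in R_ T U s ->
  exists2 t, x.2 = w_ T U s ++ t & (x.1, t) \in P_ T U s.
Proof.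
move=> Hx; have Hpre : prefix (w_ T U s) x.2 by apply/lcp_prefix/map_f.
exists (drop (size (w_ T U s)) x.2); last by apply/in_P; exists x.
by move: Hpre; rewrite prefixE => /eqP {1}<-; rewrite cat_take_drop.
Qed.

Lemma P_of_trans U s pu v q : pu \in U -> (pu.1, s, v, q) \in tE T ->
  exists2 t, pu.2 ++ v = w_ T U s ++ t & (q, t) \in P_ T U s.
Proof.
move=> Hpu He; have Hx : (q, pu.2 ++ v) \in R_ T U s by apply/in_R; exists pu => //; exists v.
exact: R_split Hx.
Qed.

Lemma trans_of_P U s z : z \in P_ T U s ->
  exists2 pu, pu \in U & exists2 v, (pu.1, s, v, z.1) \in tE T & pu.2 ++ v = w_ T U s ++ z.2.
Proof.
case/in_P=> x [Hx _] ->; have [t Ex _] := R_split Hx.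
case/in_R: Hx => pu Hpu [v He Exv]; exists pu => //; exists v => //.
by rewrite -Exv Ex drop_size_cat.
Qed.

Lemma in_U0 (z : Q * seq Gamma) : z \in U0 T -> z.1 \in tI T /\ z.2 = [::].
Proof. by case/imfsetP=> _ /mapP[i Hi ->] ->; rewrite mem_enum in Hi. Qed.

Lemma U0_in i : i \in tI T -> (i, [::]) \in U0 T.
Proof.
by move=> Hi; apply/imfsetP; exists (i, [::]); rewrite // (map_f (pair^~ [::])) ?mem_enum.
Qed.

Lemma in_rank U X : X \in rank T U <->
  exists2 z, z \in U & exists2 r, connect (tedge T) z.1 r & X = scc T r.
Proof.
split.
  case/imsetP=> r; rewrite inE => /existsP[x Hx] ->.
  by exists (val x); [apply: valP | exists r].
case=> z Hz [r Hc ->]; apply/imsetP; exists r => //.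
by rewrite inE; apply/existsP; exists (FSetSub Hz).
Qed.

Lemma rank_P_sub U s : rank T (P_ T U s) \subset rank T U.
Proof.
apply/subsetP => X /in_rank[z /trans_of_P[pu Hpu [v He _]] [r Hc ->]].
apply/in_rank; exists pu => //; exists r => //.
exact: connect_trans (connect1 (tedge_trans He)) Hc.
Qed.

Variant Wbar_step_spec U s : seq Gamma -> dst -> Prop :=
| WbarCollapse q w : rank T (P_ T U s) \proper rank T U -> (q, w) \in P_ T U s ->
    Wbar_step_spec U s (w_ T U s ++ w) [fset (q, [::])]
| WbarKeep : ~~ (rank T (P_ T U s) \proper rank T U) ->
    Wbar_step_spec U s (w_ T U s) (P_ T U s).

Lemma Wbar_transP U s v U' : Wbar_trans T U s v U' <-> Wbar_step_spec U s v U'.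
Proof.
split.
  case=> _ [[_ ->]]; case: ifP => Hpr; last by case=> -> ->; apply: WbarKeep; rewrite Hpr.
  by case=> q [w [Hq -> ->]]; apply: WbarCollapse.
case=> [q w Hpr Hq|Hpr]; exists (P_ T U s); split => //; rewrite ?Hpr.
  by exists q, w.
by rewrite (negbTE Hpr).
Qed.
End Determinisation.

Section Invariant.
Variables (Q Sigma Gamma : finType) (T : transducer Q Sigma Gamma).
Notation dst := (dstate Q Gamma).
Implicit Types (U : dst) (s : Sigma).

Definition no_common_head U := forall a, exists2 z, z \in U & ohead z.2 != Some a.

(* Between two rank drops, all pairs of a reachable state stem from runs of [T] on a
   common input from a common state [q0], whose component is still in the rank. *)
Definition Wstate_inv U := exists q0 u w0,
  [/\ forall z, z \in U -> run T q0 u (w0 ++ z.2) z.1, scc T q0 \in rank T U &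
      (forall z, z \in U -> z.2 = [::]) \/ no_common_head U].

Lemma no_common_head_P U s : (exists z, z \in P_ T U s) -> no_common_head (P_ T U s).
Proof.
case=> z0 Hz0 a.
have [/hasP[z Hz Ha]|/hasPn Hall] := boolP (has (fun z => ohead z.2 != Some a) (P_ T U s)).
  by exists z.
suff : prefix (w_ T U s ++ [:: a]) (w_ T U s) by move/size_prefix; rewrite size_cat addn1 ltnn.
apply: prefix_lcp; [|apply/allP => _ /mapP[x Hx ->]].
  case/in_P: Hz0 => x [Hx _] _; apply/eqP => E.
  by have := map_f snd Hx; rewrite E.
have [[|b t] Ex Ht] := R_split Hx; have /= := Hall _ Ht => // /negPn/eqP[<-].
by rewrite Ex -[b :: t]cat1s catA prefix_prefix.
Qed.

Lemma Wstate_inv_U0 i0 : tI T = [set i0] -> Wstate_inv (U0 T).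
Proof.
move=> HI; have U0E z : z \in U0 T -> z = (i0, [::]).
  by case: z => q w /in_U0[/= + ->]; rewrite HI inE => /eqP ->.
have Hi0 : (i0, [::]) \in U0 T by rewrite U0_in // HI inE.
exists i0, [::], [::]; split; first by move=> z /U0E ->; apply: run_nil.
  by apply/in_rank; exists (i0, [::]) => //; exists i0.
by left => z /U0E ->.
Qed.

Lemma Wstate_inv_step U s v U' : Wstate_inv U -> Wbar_trans T U s v U' -> Wstate_inv U'.
Proof.
move=> [q0 [u [w0 [Hrun Hq0 _]]]] /Wbar_transP[q w _ _|Hkeep].
  exists q, [::], [::]; split; first by move=> z; rewrite inE => /eqP ->; apply: run_nil.
    by apply/in_rank; exists (q, [::]); rewrite ?inE //; exists q.
  by left => z; rewrite inE => /eqP ->.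
have Erank : rank T (P_ T U s) = rank T U.
  by apply/eqP; rewrite eqEsubset rank_P_sub; move: Hkeep; rewrite properE rank_P_sub negbK.
exists q0, (rcons u s), (w0 ++ w_ T U s); split; last 2 first.
- by rewrite Erank.
- right; apply: no_common_head_P.
  by move: Hq0; rewrite -Erank => /in_rank[z Hz _]; exists z.
move=> z /trans_of_P[pu Hpu [v' He Ev']].
have -> : (w0 ++ w_ T U s) ++ z.2 = (w0 ++ pu.2) ++ v' by rewrite -!catA Ev'.
exact: run_rcons (Hrun _ Hpu) He.
Qed.

Lemma Wstate_inv_mrun U u w U' : mrun (Wbar T) U u w U' -> Wstate_inv U -> Wstate_inv U'.
Proof. by elim=> // {}U a v U1 {}u {}w U2 _ He _ IH /Wstate_inv_step /(_ He). Qed.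

Lemma Wstate_inv_bound U : weak_twinning T -> Wstate_inv U ->
  forall z, z \in U -> size z.2 <= (max_delay T).*2.
Proof.
move=> WT [q0 [u [w0 [Hrun /in_rank[zp Hzp [r Hc Er]] Hheads]]]].
have Hzp_q0 : connect (tedge T) zp.1 q0.
  have : q0 \in scc T r by rewrite -Er inE connect0.
  by rewrite inE => /andP[Hrq0 _]; apply: connect_trans Hc Hrq0.
have Hdelay z : z \in U -> size (Delta zp.2 z.2) <= max_delay T.
  move=> Hz; rewrite -(Delta_cat2l w0).
  exact: (Delta_run2_bounded WT (run2_of_runs (Hrun _ Hzp) (Hrun _ Hz))).
case: Hheads => [Hnil z /Hnil -> //|Hheads z Hz].
have Hzp_size : size zp.2 <= max_delay T.
  by apply: size_le_Delta_heads => a; have [z' Hz' Ha] := Hheads a; exists z'.2; last exact: Hdelay.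
by rewrite -addnn (leq_trans (size_Delta_ge zp.2 z.2)) // leq_add // Hdelay.
Qed.
End Invariant.

Lemma mrun_cat (S : Type) (Sigma Gamma : eqType) (M : mtransducer S Sigma Gamma) p u w q u' w' r :
  mrun M p u w q -> mrun M q u' w' r -> mrun M p (u ++ u') (w ++ w') r.
Proof.
elim=> //= {}p a v q0 {}u {}w r0 Hp He _ IH Hr.
by rewrite -catA; apply: mrun_cons Hp He (IH Hr).
Qed.

Section Equivalence.
Variables (Q Sigma Gamma : finType) (T : transducer Q Sigma Gamma).
Notation dst := (dstate Q Gamma).

Lemma Wbar_mrun_cons U a v U' u w U'' : Wbar_trans T U a v U' ->
  mrun (Wbar T) U' u w U'' -> mrun (Wbar T) U (a :: u) (v ++ w) U''.
Proof. by move=> He Hr; apply: mrun_cons Hr. Qed.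

Lemma Wbar_step_sound U s v U' z' : Wbar_trans T U s v U' -> z' \in U' ->
  exists2 z, z \in U & exists2 v', (z.1, s, v', z'.1) \in tE T & z.2 ++ v' = v ++ z'.2.
Proof.
case/Wbar_transP=> [q w _ Hq|_] Hz'; last exact: trans_of_P.
move: Hz'; rewrite inE => /eqP -> /=.
have [pu Hpu [v' He Ev']] := trans_of_P Hq.
by exists pu => //; exists v'; rewrite // cats0.
Qed.

Lemma Wbar_mrun_sound U u w U' : mrun (Wbar T) U u w U' -> forall z', z' \in U' ->
  exists2 z, z \in U & exists2 o, run T z.1 u o z'.1 & z.2 ++ o = w ++ z'.2.
Proof.
elim=> [U0' _|U1 a v U2 {}u {}w U3 _ He _ IH] z' Hz'.
  by exists z' => //; exists [::]; [apply: run_nil | rewrite cats0].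
have [z2 Hz2 [o Hr Eo]] := IH _ Hz'.
have [z Hz [v' He' Ev']] := Wbar_step_sound He Hz2.
exists z => //; exists (v' ++ o); first exact: run_cons He' Hr.
by rewrite catA Ev' -!catA Eo.
Qed.

Lemma Wbar_step_complete U z s v' q' : z \in U -> (z.1, s, v', q') \in tE T ->
  exists v U' z', [/\ Wbar_trans T U s v U', z' \in U', z'.1 = q' & z.2 ++ v' = v ++ z'.2].
Proof.
move=> Hz He; have [t Et Ht] := P_of_trans Hz He.
have [Hpr|Hkeep] := boolP (rank T (P_ T U s) \proper rank T U).
  exists (w_ T U s ++ t), [fset (q', [::])], (q', [::]); split; rewrite ?inE ?cats0 //.
  exact/Wbar_transP/WbarCollapse.
exists (w_ T U s), (P_ T U s), (q', t); split => //.
exact/Wbar_transP/WbarKeep.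
Qed.

Lemma Wbar_mrun_complete p u o q : run T p u o q -> forall U z, z \in U -> z.1 = p ->
  exists U' w z', [/\ mrun (Wbar T) U u w U', z' \in U', z'.1 = q & z.2 ++ o = w ++ z'.2].
Proof.
elim=> [p0|p0 a v q0 {}u {}o r He _ IH] U z Hz Ez.
  by exists U, [::], z; split => //; [apply: mrun_nil | rewrite cats0].
rewrite -Ez in He; have [v0 [U1 [z1 [Ht Hz1 Ez1 Ev0]]]] := Wbar_step_complete Hz He.
have [U' [w [z' [Hr Hz' Ez' Ew]]]] := IH _ _ Hz1 Ez1.
exists U', (v0 ++ w), z'; split => //; first exact: Wbar_mrun_cons Ht Hr.
by rewrite catA Ev0 -!catA Ew.
Qed.

Lemma W_mrun_Wbar U u w U' : mrun (W T) U u w U' -> mrun (Wbar T) U u w U'.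
Proof.
elim=> [U0' _|U1 a v U2 {}u {}w U3 _ [_ _ He] _ IH]; first exact: mrun_nil.
exact: Wbar_mrun_cons He IH.
Qed.

Lemma Wbar_mrun_W U u w U' : mrun (Wbar T) U u w U' ->
  (exists u0 w0, mrun (Wbar T) (U0 T) u0 w0 U) -> dfinal T U' -> mrun (W T) U u w U'.
Proof.
move=> Hr; have Hr' := Hr.
elim: Hr Hr' => [U1 _|U1 a v U2 {}u {}w U3 _ He Hr IH] Hr' [u0 [w0 H0]] Hf.
  by apply: mrun_nil; exists (U0 T), U1, u0, w0, [::], [::]; split => //; apply: mrun_nil.
have H02 : mrun (Wbar T) (U0 T) (u0 ++ [:: a]) (w0 ++ v) U2.
  by apply: mrun_cat H0 _; rewrite -[v]cats0; apply: Wbar_mrun_cons He _; apply: mrun_nil.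
have Htrim1 : mtrim_state (Wbar T) U1 by exists (U0 T), U3, u0, w0, (a :: u), (v ++ w).
have Htrim2 : mtrim_state (Wbar T) U2 by exists (U0 T), U3, (u0 ++ [:: a]), (w0 ++ v), u, w.
have HW2 : mrun (W T) U2 u w U3 by apply: IH Hr _ Hf; exists (u0 ++ [:: a]), (w0 ++ v).
by apply: (mrun_cons (M := W T)) HW2.
Qed.

Lemma W_realises u out : mrealises (W T) u out <-> realises T u out.
Proof.
split.
  case=> _ [U [w [x [[-> _] [Hf _] Hr Hx ->]]]].
  case/mapP: Hx => z; rewrite mem_filter => /andP[HzF Hz] ->.
  have [z0 /in_U0[Hi E0] [o Hro Eo]] := Wbar_mrun_sound (W_mrun_Wbar Hr) Hz.
  by exists z0.1, z.1, o; split => //; rewrite catA -Eo E0.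
case=> i [t [o [Hi Ht Hr ->]]].
have [U [w [z [HrU Hz Ez Ew]]]] := Wbar_mrun_complete Hr (U0_in Hi) erefl.
have Hf : dfinal T U by apply/hasP; exists z; rewrite ?Ez.
have Hr0 : mrun (Wbar T) (U0 T) [::] [::] (U0 T) by apply: mrun_nil.
have HrW := Wbar_mrun_W HrU (ex_intro _ _ (ex_intro _ _ Hr0)) Hf.
exists (U0 T), U, w, (z.2 ++ tf T t); split => //.
- by split => //; exists (U0 T), U, [::], [::], u, w.
- by split => //; exists (U0 T), U, u, w, [::], [::]; split => //; apply: mrun_nil.
- by apply/mapP; exists z; rewrite ?mem_filter ?Ez ?Ht.
- by rewrite catA -Ew.
Qed.
End Equivalence.

Section Finiteness.
Variables (Q Sigma Gamma : finType) (T : transducer Q Sigma Gamma).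
Notation dst := (dstate Q Gamma).

Definition short_words n : seq (seq Gamma) :=
  flatten [seq [seq tval t | t : m.-tuple Gamma] | m <- iota 0 n.+1].

Lemma short_wordsP n w : size w <= n -> w \in short_words n.
Proof.
move=> Hw; apply/flatten_mapP; exists (size w); first by rewrite mem_iota.
by apply/mapP; exists (in_tuple w); rewrite ?mem_enum.
Qed.

Definition short_pairs n : {fset Q * seq Gamma} :=
  [fset x | x in [seq (q, w) | q <- enum Q, w <- short_words n]].

Definition bounded_states n : seq dst := enum_fset (fpowerset (short_pairs n)).

Lemma bounded_statesP n U : (forall z, z \in U -> size z.2 <= n) -> U \in bounded_states n.
Proof.
move=> HU; rewrite /bounded_states fpowersetE; apply/fsubsetP => z Hz.
apply/imfsetP; exists z => //; case: z Hz => q w Hz.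
by apply: allpairs_f; rewrite ?mem_enum // short_wordsP // (HU _ Hz).
Qed.

Definition Wbar_outputs (U : dst) a : seq (seq Gamma) :=
  w_ T U a :: [seq w_ T U a ++ z.2 | z <- enum_fset (P_ T U a)].

Definition bounded_transitions n : seq (dst * Sigma * seq Gamma * dst) :=
  [seq (Ua.1, Ua.2, vU.1, vU.2)
  | Ua <- [seq (U, a) | U <- bounded_states n, a <- enum Sigma],
    vU <- [seq (v, U') | v <- Wbar_outputs Ua.1 Ua.2, U' <- bounded_states n]].

Lemma Wbar_outputsP U a v U' : Wbar_trans T U a v U' -> v \in Wbar_outputs U a.
Proof.
case/Wbar_transP=> [q w _ Hq|_]; last exact: mem_head.
by rewrite inE; apply/orP; right; apply/mapP; exists (q, w).
Qed.

Hypothesis WT : weak_twinning T.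
Hypothesis single_initial : exists i0, tI T = [set i0].

Lemma W_state_bounded U : mQ (W T) U -> U \in bounded_states (max_delay T).*2.
Proof.
case=> _ [_ [u1 [w1 [_ [_ [-> _ Hr _]]]]]]; have [i0 HI] := single_initial.
exact/bounded_statesP/(Wstate_inv_bound WT)/(Wstate_inv_mrun Hr)/(Wstate_inv_U0 HI).
Qed.

Lemma W_finite : mfinite (W T).
Proof.
exists (bounded_states (max_delay T).*2), (bounded_transitions (max_delay T).*2).
split; first exact: W_state_bounded.
move=> U a v U' [HU HU' He].
apply: (@allpairs_f_dep _ _ _ _ _ _ (U, a) (v, U')).
  by apply: allpairs_f; rewrite ?mem_enum ?W_state_bounded.
by apply: allpairs_f; [apply: Wbar_outputsP He | apply: W_state_bounded].
Qed.
End Finiteness.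

Theorem proposition2 (Q Sigma Gamma : finType) (T : transducer Q Sigma Gamma) :
  is_trim T -> (exists i0 : Q, tI T = [set i0]) ->
  (forall (u : seq Sigma) (out : seq Gamma), mrealises (W T) u out <-> realises T u out) /\
  (weak_twinning T -> mfinite (W T)).
Proof.
move=> _ HI; split; first exact: W_realises.
by move=> WT; apply: W_finite.
Qed.
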